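(* Let $\varepsilon\in[0,1)$ and let $T:\Delta\to\Sigma_1$ be a test that $\Delta$-controls for type I error with probability $1-\varepsilon$, i.e. $P(T(P))\le\varepsilon$ for every $P\in\Delta$. Then for every $\delta\in(0,1-\varepsilon]$ the test $T$ can be manipulated with probability $1-\varepsilon-\delta$: there is a strategy $\zeta$ (a finitely supported probability on $\Delta$) such that for every $\omega\in\Omega$, $\zeta(\{P\in\Delta:\omega\notin T(P)\})\ge 1-\varepsilon-\delta$.
   Context: Let $\Omega=\{0,1\}^{\mathbb N}$ (paths) with the product topology; for $\omega\in\Omega$, $t\ge0$, $\omega^t$ is the cylinder of paths agreeing with $\omega$ in the first $t$ coordinates. $\Sigma$ is a fixed $\sigma$-algebra on $\Omega$ containing all cylinders; $\Sigma_1$ is the family of open subsets of $\Omega$ (equivalently, countable unions of cylinders). $\mathbb P$ is the set of finitely additive probabilities on $(\Omega,\Sigma)$. $P\in\mathbb P$ is strongly nonatomic (an ''opinion'') if for every $E\in\Sigma$ and $\alpha\in[0,1]$ there is $F\in\Sigma$ with $F\subseteq E$ and $P(F)=\alpha P(E)$; $\Delta$ denotes the set of opinions. A test is a function $T:\Delta\to\Sigma_1$. A strategy is a probability measure on $\Delta$ with finite support. *)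

From Stdlib Require Import Reals List ClassicalEpsilon.
Open Scope R_scope.

Definition Omega := nat -> bool.
Definition event := Omega -> Prop.

Definition cylinder (w : Omega) (t : nat) : event :=
  fun w' => forall i, (i < t)%nat -> w' i = w i.

Definition subset (A B : event) : Prop := forall w, A w -> B w.

Definition is_sigma_algebra (S : event -> Prop) : Prop :=
  S (fun _ => True) /\
  (forall E, S E -> S (fun w => ~ E w)) /\
  (forall En : nat -> event, (forall n, S (En n)) -> S (fun w => exists n, En n w)).

Definition contains_cylinders (S : event -> Prop) : Prop :=
  forall w t, S (cylinder w t).

Definition is_open (A : event) : Prop :=
  forall w, A w -> exists t, subset (cylinder w t) A.

Definition setfun := event -> R.

Definition fa_prob (S : event -> Prop) (P : setfun) : Prop :=
  (forall E, S E -> 0 <= P E) /\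
  P (fun _ => True) = 1 /\
  (forall E F, S E -> S F -> (forall w, E w -> F w -> False) ->
     P (fun w => E w \/ F w) = P E + P F).

Definition strongly_nonatomic (S : event -> Prop) (P : setfun) : Prop :=
  forall E alpha, S E -> 0 <= alpha <= 1 ->
    exists F, S F /\ subset F E /\ P F = alpha * P E.

Definition opinion (S : event -> Prop) (P : setfun) : Prop :=
  fa_prob S P /\ strongly_nonatomic S P.

(** A finitely supported probability on Delta, given as a finite list of
    (opinion, weight) pairs. *)
Definition strategy (S : event -> Prop) (z : list (setfun * R)) : Prop :=
  (forall Pw, In Pw z -> opinion S (fst Pw) /\ 0 <= snd Pw) /\
  fold_right (fun Pw acc => snd Pw + acc) 0 z = 1.

Fixpoint mass (z : list (setfun * R)) (A : setfun -> Prop) : R :=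
  match z with
  | nil => 0
  | (P, w) :: z' =>
      (if excluded_middle_informative (A P) then w else 0) + mass z' A
  end.

From Stdlib Require Import Reals List ClassicalEpsilon Classical
  FunctionalExtensionality PropExtensionality ZArith Lra Lia.
From mathcomp Require classical_sets filter.
Open Scope R_scope.

(* Suppose no strategy manipulates T with probability 1 - eps - delta: every finitely
   supported mixture of opinions is then beaten by a path rejected by more than
   eps + delta of its weight.  A finite minimax theorem (multiplicative weights) turns
   this around: for each finite list of opinions there are finitely many paths such
   that every listed opinion Q has at least a fraction eps + delta/2 of them in T(Q).
   Replace each path x by a diffuse Dirac mass, the ultralimit of the uniform
   distributions on 2^n dyadic points in the cylinder of x of length n; it is strongly
   nonatomic, finitely additive, and gives mass 1 to every open set containing x.  An
   ultralimit over finite lists of opinions of the averages of these masses is an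
   opinion P with P(T(P)) >= eps + delta/2 > eps, contradicting type I error control. *)

Lemma directed_in_ultrafilter {J T : Type} (B : J -> T -> Prop) :
  inhabited J ->
  (forall i j, exists k, forall t, B k t -> B i t /\ B j t) ->
  (forall i, exists t, B i t) ->
  exists U, filter.UltraFilter U /\ forall i, U (B i).
Proof.
  intros [i0] Bdir Bne.
  assert (HF : filter.ProperFilter (filter.filter_from classical_sets.setT B)).
  { apply filter.filter_from_proper.
    - apply filter.filter_fromT_filter; [exists i0; exact I | exact Bdir].
    - intros i _; exact (Bne i). }
  destruct (filter.ultraFilterLemma HF) as [U [HU sub]].
  exists U; split; [exact HU |].
  intros i; apply sub; exists i; [exact I | intros t Bt; exact Bt].
Qed.

Section UltraLimit.

Context {J : Type} (U : (J -> Prop) -> Prop) `{HU : filter.UltraFilter J U}.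

Lemma uf_all (A : J -> Prop) : (forall i, A i) -> U A.
Proof. intros H; exact (filter.filterS (fun i _ => H i) filter.filterT). Qed.

Lemma uf_mono (A B : J -> Prop) : (forall i, A i -> B i) -> U A -> U B.
Proof. intros H; exact (filter.filterS H). Qed.

Lemma uf_and (A B : J -> Prop) : U A -> U B -> U (fun i => A i /\ B i).
Proof. exact (@filter.filterI _ U _ A B). Qed.

Lemma uf_nonempty (A : J -> Prop) : U A -> exists i, A i.
Proof. exact filter.filter_ex. Qed.

Lemma uf_ultra (A : J -> Prop) : U A \/ U (fun i => ~ A i).
Proof. exact (filter.in_ultra_setVsetC A HU). Qed.

Definition is_ulim (f : J -> R) (L : R) : Prop :=
  forall e, 0 < e -> U (fun i => Rabs (f i - L) < e).

Lemma is_ulim_unique f L1 L2 : is_ulim f L1 -> is_ulim f L2 -> L1 = L2.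
Proof.
  intros H1 H2. destruct (Req_dec L1 L2) as [|Hne]; [assumption | exfalso].
  assert (He : 0 < Rabs (L1 - L2) / 2) by (pose proof (Rabs_pos_lt (L1 - L2)); lra).
  destruct (uf_nonempty _ (uf_and _ _ (H1 _ He) (H2 _ He))) as [i [d1 d2]].
  pose proof (Rabs_triang (L1 - f i) (f i - L2)) as Htri.
  rewrite Rabs_minus_sym in Htri.
  replace (L1 - f i + (f i - L2)) with (L1 - L2) in Htri by ring. lra.
Qed.

Lemma is_ulim_ge f L c : U (fun i => c <= f i) -> is_ulim f L -> c <= L.
Proof.
  intros Hc Hf. destruct (Rle_dec c L) as [|Hn]; [assumption | exfalso].
  destruct (uf_nonempty _ (uf_and _ _ Hc (Hf (c - L) ltac:(lra)))) as [i [h1 h2]].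
  apply Rabs_def2 in h2. lra.
Qed.

Lemma is_ulim_le f L c : U (fun i => f i <= c) -> is_ulim f L -> L <= c.
Proof.
  intros Hc Hf. destruct (Rle_dec L c) as [|Hn]; [assumption | exfalso].
  destruct (uf_nonempty _ (uf_and _ _ Hc (Hf (L - c) ltac:(lra)))) as [i [h1 h2]].
  apply Rabs_def2 in h2. lra.
Qed.

(* The limit is the supremum of the reals [r] with [r <= f] on a set of the ultrafilter. *)
Lemma is_ulim_bounded f a b : (forall i, a <= f i <= b) -> exists L, is_ulim f L.
Proof.
  intros Hb. set (E := fun r => U (fun i => r <= f i)).
  assert (Eb : bound E).
  { exists b; intros r Er. destruct (Rle_dec r b) as [|Hn]; [assumption | exfalso].
    destruct (uf_nonempty _ Er) as [i Hi]. specialize (Hb i). lra. }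
  assert (Ea : exists r, E r) by (exists a; apply uf_all; apply Hb).
  destruct (completeness E Eb Ea) as [L [Lub Lleast]].
  exists L; intros e He.
  assert (Hlow : U (fun i => L - e < f i)).
  { apply NNPP; intros Hn.
    enough (L <= L - e) by lra. apply Lleast; intros r Er.
    destruct (Rle_dec r (L - e)) as [|Hr]; [assumption | exfalso].
    apply Hn; revert Er; apply uf_mono; intros i Hi; lra. }
  assert (Hup : U (fun i => f i < L + e)).
  { destruct (uf_ultra (fun i => f i < L + e)) as [|Hn]; [assumption | exfalso].
    enough (L + e <= L) by lra.
    apply Lub; revert Hn; apply uf_mono; intros i Hi; lra. }
  generalize (uf_and _ _ Hlow Hup); apply uf_mono; intros i [h1 h2]; apply Rabs_def1; lra.
Qed.

Lemma is_ulim_const c : is_ulim (fun _ => c) c.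
Proof. intros e He; apply uf_all; intros _; rewrite Rminus_diag, Rabs_R0; exact He. Qed.

Lemma is_ulim_eventually f g L : U (fun i => f i = g i) -> is_ulim f L -> is_ulim g L.
Proof.
  intros Hfg Hf e He.
  generalize (uf_and _ _ Hfg (Hf e He)); apply uf_mono.
  intros i [h1 h2]; rewrite <- h1; exact h2.
Qed.

Lemma is_ulim_plus f g a b : is_ulim f a -> is_ulim g b -> is_ulim (fun i => f i + g i) (a + b).
Proof.
  intros Hf Hg e He.
  generalize (uf_and _ _ (Hf (e/2) ltac:(lra)) (Hg (e/2) ltac:(lra))); apply uf_mono.
  intros i [h1 h2]. replace (f i + g i - (a + b)) with ((f i - a) + (g i - b)) by ring.
  pose proof (Rabs_triang (f i - a) (g i - b)). lra.
Qed.

Lemma is_ulim_scal f a c : is_ulim f a -> is_ulim (fun i => c * f i) (c * a).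
Proof.
  intros Hf e He.
  assert (Hc : 0 < Rabs c + 1) by (pose proof (Rabs_pos c); lra).
  generalize (Hf (e / (Rabs c + 1)) ltac:(apply Rdiv_lt_0_compat; lra)); apply uf_mono.
  intros i Hi. rewrite <- Rmult_minus_distr_l, Rabs_mult.
  apply Rle_lt_trans with ((Rabs c + 1) * Rabs (f i - a)).
  - apply Rmult_le_compat_r; [apply Rabs_pos | lra].
  - apply (Rmult_lt_compat_l (Rabs c + 1)) in Hi; [|exact Hc].
    replace ((Rabs c + 1) * (e / (Rabs c + 1))) with e in Hi by (field; lra). exact Hi.
Qed.

Definition ulim (f : J -> R) : R := epsilon (inhabits 0) (is_ulim f).

Lemma is_ulim_ulim f a b : (forall i, a <= f i <= b) -> is_ulim f (ulim f).
Proof. intros Hb; unfold ulim; apply epsilon_spec, (is_ulim_bounded f a b Hb). Qed.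

Lemma ulim_eq f L : is_ulim f L -> ulim f = L.
Proof. intros H; apply (is_ulim_unique f); [unfold ulim; apply epsilon_spec; exists L |]; exact H. Qed.
End UltraLimit.

Definition sumL {A} (f : A -> R) (l : list A) : R := fold_right (fun a acc => f a + acc) 0 l.

Section FiniteSums.

Context {A : Type}.
Implicit Types (f g : A -> R) (l : list A).

Lemma sumL_app f l1 l2 : sumL f (l1 ++ l2) = sumL f l1 + sumL f l2.
Proof. induction l1 as [|a l1 IH]; simpl; [ring|]. unfold sumL in *; simpl; rewrite IH; ring. Qed.

Lemma sumL_plus f g l : sumL (fun a => f a + g a) l = sumL f l + sumL g l.
Proof. induction l as [|a l IH]; unfold sumL in *; simpl; [ring|rewrite IH; ring]. Qed.

Lemma sumL_minus f g l : sumL (fun a => f a - g a) l = sumL f l - sumL g l.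
Proof. induction l as [|a l IH]; unfold sumL in *; simpl; [ring|rewrite IH; ring]. Qed.

Lemma sumL_scal c f l : sumL (fun a => c * f a) l = c * sumL f l.
Proof. induction l as [|a l IH]; unfold sumL in *; simpl; [ring|rewrite IH; ring]. Qed.

Lemma sumL_ext f g l : (forall a, In a l -> f a = g a) -> sumL f l = sumL g l.
Proof.
  induction l as [|a l IH]; unfold sumL in *; simpl; intros H; [reflexivity|].
  rewrite IH, H; auto.
Qed.

Lemma sumL_le f g l : (forall a, In a l -> f a <= g a) -> sumL f l <= sumL g l.
Proof.
  induction l as [|a l IH]; unfold sumL in *; simpl; intros H; [lra|].
  pose proof (H a (or_introl eq_refl)). pose proof (IH (fun b Hb => H b (or_intror Hb))). lra.
Qed.

Lemma sumL_const c l : sumL (fun _ => c) l = INR (length l) * c.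
Proof.
  induction l as [|a l IH]; [simpl; ring|].
  change (c + sumL (fun _ => c) l = INR (S (length l)) * c). rewrite IH, S_INR; ring.
Qed.

Lemma sumL_unit_interval f l :
  (forall a, In a l -> 0 <= f a <= 1) -> 0 <= sumL f l <= INR (length l).
Proof.
  intros H. pose proof (sumL_const 0 l). pose proof (sumL_const 1 l).
  split; [apply Rle_trans with (sumL (fun _ => 0) l) | apply Rle_trans with (sumL (fun _ => 1) l)];
    try (apply sumL_le; intros a Ha; apply H, Ha); lra.
Qed.

Lemma sumL_ge_term f l a : (forall b, In b l -> 0 <= f b) -> In a l -> f a <= sumL f l.
Proof.
  intros Hpos Ha. induction l as [|b l IH]; [destruct Ha|].
  change (f a <= f b + sumL f l).
  assert (0 <= sumL f l).
  { pose proof (sumL_const 0 l). apply Rle_trans with (sumL (fun _ => 0) l); [lra|].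
    apply sumL_le; intros; apply Hpos; right; assumption. }
  destruct Ha as [<-|Ha]; [lra|].
  pose proof (Hpos b (or_introl eq_refl)).
  pose proof (IH (fun c Hc => Hpos c (or_intror Hc)) Ha). lra.
Qed.

End FiniteSums.

Lemma sumL_map {A B} (f : B -> R) (g : A -> B) l : sumL f (map g l) = sumL (fun a => f (g a)) l.
Proof. induction l as [|a l IH]; unfold sumL in *; simpl; [reflexivity | rewrite IH; reflexivity]. Qed.

Lemma length_pos {A} (l : list A) : l <> nil -> 0 < INR (length l).
Proof. destruct l; [contradiction | intros _; simpl length; rewrite S_INR; pose proof (pos_INR (length l)); lra]. Qed.

Definition indP (P : Prop) : R := if excluded_middle_informative P then 1 else 0.

Lemma indP_T (P : Prop) : P -> indP P = 1.
Proof. unfold indP; destruct (excluded_middle_informative P); tauto. Qed.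

Lemma indP_F (P : Prop) : ~ P -> indP P = 0.
Proof. unfold indP; destruct (excluded_middle_informative P); tauto. Qed.

Lemma indP_unit_interval (P : Prop) : 0 <= indP P <= 1.
Proof. unfold indP; destruct (excluded_middle_informative P); lra. Qed.

Lemma indP_or (P Q : Prop) : (P -> Q -> False) -> indP (P \/ Q) = indP P + indP Q.
Proof.
  intros H. destruct (classic P); destruct (classic Q);
  repeat first [rewrite indP_T by tauto | rewrite indP_F by tauto]; tauto || ring.
Qed.

Section MultiplicativeWeights.

Variables (X : Type) (x0 : X) (n : nat) (gain : X -> nat -> R) (c eta : R).
Hypothesis gain01 : forall x i, gain x i = 0 \/ gain x i = 1.
Hypothesis n_pos : (0 < n)%nat.
Hypothesis eta_pos : 0 < eta.
Hypothesis best_response : forall p : nat -> R,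
  (forall i, 0 <= p i) -> sumL p (seq 0 n) = 1 ->
  exists x, sumL (fun i => p i * gain x i) (seq 0 n) > c.

Definition potential (G : nat -> R) : R := sumL (fun i => exp (- eta * G i)) (seq 0 n).

Definition mw_response (G : nat -> R) : X :=
  epsilon (inhabits x0)
    (fun x => sumL (fun i => exp (- eta * G i) / potential G * gain x i) (seq 0 n) > c).

Fixpoint mw_gains (k : nat) : nat -> R :=
  match k with
  | O => fun _ => 0
  | S k => fun i => mw_gains k i + gain (mw_response (mw_gains k)) i
  end.

Lemma potential_pos G : 0 < potential G.
Proof.
  apply Rlt_le_trans with (exp (- eta * G 0%nat)); [apply exp_pos|].
  apply (sumL_ge_term (fun i => exp (- eta * G i))).
  - intros; left; apply exp_pos.
  - apply in_seq; lia.
Qed.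

Lemma mw_response_gain G :
  sumL (fun i => exp (- eta * G i) * gain (mw_response G) i) (seq 0 n) > potential G * c.
Proof.
  pose proof (potential_pos G) as HW.
  assert (Hx : sumL (fun i => exp (- eta * G i) / potential G * gain (mw_response G) i) (seq 0 n) > c).
  { unfold mw_response; apply epsilon_spec, best_response.
    - intros i; left; apply Rdiv_lt_0_compat; [apply exp_pos | exact HW].
    - unfold Rdiv; rewrite (sumL_ext _ (fun i => / potential G * exp (- eta * G i)))
        by (intros; ring).
      rewrite sumL_scal; fold (potential G); field; lra. }
  unfold Rdiv in Hx; rewrite (sumL_ext _ (fun i => / potential G * (exp (- eta * G i) *
    gain (mw_response G) i))), sumL_scal in Hx by (intros; ring).
  apply (Rmult_gt_compat_l (potential G)) in Hx; [|exact HW].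
  rewrite <- Rmult_assoc, Rinv_r, Rmult_1_l in Hx by lra. lra.
Qed.

(* With gains in {0,1}: exp (-eta (G + g)) = exp (-eta G) (1 - a g), where a = 1 - exp (-eta). *)
Lemma potential_step G :
  potential (fun i => G i + gain (mw_response G) i)
  <= potential G * exp (- ((1 - exp (- eta)) * c)).
Proof.
  set (a := 1 - exp (- eta)).
  assert (Ha : 0 < a).
  { unfold a; rewrite <- exp_0; pose proof (exp_increasing (- eta) 0 ltac:(lra)); lra. }
  assert (Hstep : potential (fun i => G i + gain (mw_response G) i)
    = potential G - a * sumL (fun i => exp (- eta * G i) * gain (mw_response G) i) (seq 0 n)).
  { unfold potential; rewrite <- sumL_scal, <- sumL_minus.
    apply sumL_ext; intros i _.
    rewrite Rmult_plus_distr_l, exp_plus; unfold a.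
    destruct (gain01 (mw_response G) i) as [-> | ->];
      [rewrite Rmult_0_r, exp_0 | rewrite Rmult_1_r]; ring. }
  pose proof (mw_response_gain G). pose proof (potential_pos G).
  pose proof (exp_ineq1_le (- (a * c))).
  rewrite Hstep. apply Rle_trans with (potential G * (1 + - (a * c))); [nra|].
  apply Rmult_le_compat_l; lra.
Qed.

Lemma potential_mw_gains k :
  potential (mw_gains k) <= INR n * exp (- ((1 - exp (- eta)) * c) * INR k).
Proof.
  induction k as [|k IH].
  - unfold potential; simpl mw_gains.
    rewrite (sumL_ext _ (fun _ => 1)) by (intros; rewrite Rmult_0_r, exp_0; reflexivity).
    rewrite sumL_const, length_seq, Rmult_0_r, exp_0; lra.
  - eapply Rle_trans; [apply potential_step|]. rewrite S_INR, Rmult_plus_distr_l, Rmult_1_r, exp_plus.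
    rewrite <- Rmult_assoc. apply Rmult_le_compat_r; [left; apply exp_pos | exact IH].
Qed.

Lemma mw_gains_sum k i :
  mw_gains k i = sumL (fun j => gain (mw_response (mw_gains j)) i) (seq 0 k).
Proof.
  induction k as [|k IH]; [reflexivity|].
  rewrite seq_S, sumL_app, <- IH; simpl; ring.
Qed.

(* An expert whose gain after K rounds is below c2 K keeps weight above
   exp (-eta c2 K), while the potential is at most n exp (-a c K) with
   a >= eta/(1+eta): impossible once K is large. *)
Lemma mw_guarantee c2 : 0 < c2 -> c2 * (1 + eta) < c ->
  exists K, (0 < K)%nat /\ forall i, (i < n)%nat -> mw_gains K i >= c2 * INR K.
Proof.
  intros Hc2 Hc. set (a := 1 - exp (- eta)).
  assert (Ha : eta / (1 + eta) <= a).
  { unfold a; pose proof (exp_ineq1_le eta); rewrite exp_Ropp.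
    pose proof (exp_pos eta).
    apply (Rmult_le_reg_r (exp eta * (1 + eta))); [nra|].
    field_simplify; lra. }
  set (th := a * c - eta * c2).
  assert (Hth : 0 < th).
  { assert (eta * c2 < eta / (1 + eta) * c).
    { unfold Rdiv; apply (Rmult_lt_reg_r (1 + eta)); [lra|].
      replace (eta * / (1 + eta) * c * (1 + eta)) with (eta * c) by (field; lra). nra. }
    assert (eta / (1 + eta) * c <= a * c) by (apply Rmult_le_compat_r; nra).
    unfold th; lra. }
  destruct (INR_archimed th (INR n) Hth) as [K HK].
  exists K; split.
  { destruct K; [simpl in HK; pose proof (pos_INR n); lra | lia]. }
  intros i Hi. apply Rnot_lt_ge; intros Hlt.
  assert (A1 : exp (- eta * mw_gains K i) <= potential (mw_gains K)).
  { apply (sumL_ge_term (fun j => exp (- eta * mw_gains K j))).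
    - intros; left; apply exp_pos.
    - apply in_seq; lia. }
  assert (A2 : exp (- eta * (c2 * INR K)) < exp (- eta * mw_gains K i))
    by (apply exp_increasing; nra).
  pose proof (potential_mw_gains K) as A3; fold a in A3.
  assert (A4 : exp (th * INR K) < INR n).
  { replace (th * INR K) with (- eta * (c2 * INR K) + - (- (a * c) * INR K)) by (unfold th; ring).
    rewrite exp_plus, exp_Ropp.
    pose proof (exp_pos (- (a * c) * INR K)).
    apply (Rmult_lt_reg_r (exp (- (a * c) * INR K))); [assumption|].
    field_simplify; lra. }
  pose proof (exp_ineq1_le (th * INR K)). lra.
Qed.

End MultiplicativeWeights.

(* A finite form of the minimax theorem. *)
Lemma uniform_response_average (X : Type) (x0 : X) (n : nat) (gain : X -> nat -> R) (c c2 : R) :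
  (forall x i, gain x i = 0 \/ gain x i = 1) -> 0 < c2 < c ->
  (forall p : nat -> R, (forall i, 0 <= p i) -> sumL p (seq 0 n) = 1 ->
     exists x, sumL (fun i => p i * gain x i) (seq 0 n) > c) ->
  exists xs : list X, xs <> nil /\
    forall i, (i < n)%nat -> sumL (fun x => gain x i) xs >= c2 * INR (length xs).
Proof.
  intros gain01 Hc best_response.
  destruct n as [|n'].
  { exists (x0 :: nil); split; [discriminate | intros i Hi; lia]. }
  set (eta := (c - c2) / (2 * c2)).
  assert (Heta : 0 < eta) by (unfold eta; apply Rdiv_lt_0_compat; lra).
  assert (Hc2 : c2 * (1 + eta) < c) by (unfold eta; field_simplify; lra).
  destruct (mw_guarantee X x0 (S n') gain c eta gain01 ltac:(lia) Heta best_response c2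
              (proj1 Hc) Hc2) as [K [HK Hgain]].
  exists (map (fun k => mw_response X x0 (S n') gain c eta (mw_gains X x0 (S n') gain c eta k)) (seq 0 K)).
  split; [destruct K; [lia | discriminate] |].
  intros i Hi. rewrite length_map, length_seq.
  specialize (Hgain i Hi). rewrite mw_gains_sum in Hgain.
  rewrite sumL_map. exact Hgain.
Qed.

Fixpoint words (n : nat) : list (list bool) :=
  match n with
  | O => nil :: nil
  | S m => map (cons false) (words m) ++ map (cons true) (words m)
  end.

Lemma in_words n v : In v (words n) <-> length v = n.
Proof.
  revert v; induction n as [|n IH]; intros v; simpl.
  - split; [intros [<-|[]]; reflexivity | destruct v; [left; reflexivity | discriminate]].
  - rewrite in_app_iff, !in_map_iff. split.
    + intros [[w [<- Hw]]|[w [<- Hw]]]; simpl; f_equal; apply IH; exact Hw.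
    + destruct v as [|b w]; simpl; intros H; [discriminate|]. injection H as H.
      destruct b; [right | left]; exists w; split; auto; apply IH; exact H.
Qed.

Lemma words_nodup n : NoDup (words n).
Proof.
  induction n as [|n IH]; simpl; [constructor; [intros [] | constructor]|].
  apply NoDup_app.
  - apply NoDup_map_NoDup_ForallPairs; [intros a b _ _ H; injection H; auto | exact IH].
  - apply NoDup_map_NoDup_ForallPairs; [intros a b _ _ H; injection H; auto | exact IH].
  - intros x H1 H2. apply in_map_iff in H1, H2.
    destruct H1 as [a [<- _]], H2 as [b [H _]]. discriminate.
Qed.

Lemma length_words n : INR (length (words n)) = 2 ^ n.
Proof.
  induction n as [|n IH]; [reflexivity|].
  simpl words. rewrite length_app, !length_map, plus_INR, IH. simpl; ring.
Qed.

(* The trailing [true] makes [word_path] injective. *)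
Definition word_path (u : list bool) : Omega := fun i => nth i (u ++ true :: nil) false.

Lemma word_path_inj u u' : word_path u = word_path u' -> u = u'.
Proof.
  intros H.
  assert (Hend : forall u0, word_path u0 (length u0) = true /\
                   forall i, (length u0 < i)%nat -> word_path u0 i = false).
  { intros u0; unfold word_path; split.
    - rewrite app_nth2, Nat.sub_diag by lia; reflexivity.
    - intros i Hi; apply nth_overflow; rewrite length_app; simpl; lia. }
  assert (Hl : length u = length u').
  { destruct (Hend u) as [e1 f1], (Hend u') as [e2 f2].
    destruct (Nat.lt_trichotomy (length u) (length u')) as [Hlt | [Heq | Hlt]]; [| exact Heq |].
    - rewrite <- H, f1 in e2 by lia; discriminate.
    - rewrite H, f2 in e1 by lia; discriminate. }
  apply nth_ext with (d := false) (d' := false); [exact Hl|].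
  intros i Hi. pose proof (f_equal (fun f => f i) H) as Hi'. unfold word_path in Hi'.
  rewrite !app_nth1 in Hi' by lia. exact Hi'.
Qed.

Definition prefix (x : Omega) (n : nat) : list bool := map x (seq 0 n).

Lemma length_prefix x n : length (prefix x n) = n.
Proof. unfold prefix; rewrite length_map, length_seq; reflexivity. Qed.

Lemma word_path_prefix x n v i : (i < n)%nat -> word_path (prefix x n ++ v) i = x i.
Proof.
  intros Hi. unfold word_path. rewrite <- app_assoc, app_nth1 by (rewrite length_prefix; exact Hi).
  unfold prefix. rewrite nth_indep with (d' := x 0%nat) by (rewrite length_map, length_seq; exact Hi).
  rewrite map_nth, seq_nth by exact Hi. reflexivity.
Qed.

Lemma app_inv_length {A} (x1 x2 y1 y2 : list A) :
  x1 ++ x2 = y1 ++ y2 -> length x1 = length y1 -> x1 = y1 /\ x2 = y2.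
Proof.
  intros H Hl. destruct (app_eq_app _ _ _ _ H) as [l [[H1 H2]|[H1 H2]]]; subst;
    rewrite length_app in Hl; destruct l; simpl in *; try lia; rewrite app_nil_r; auto.
Qed.

Lemma event_ext (A B : event) : (forall w, A w <-> B w) -> A = B.
Proof. intros H; apply functional_extensionality; intro w; apply propositional_extensionality, H. Qed.

Section Measurability.

Variable S : event -> Prop.
Hypothesis HS : is_sigma_algebra S.
Hypothesis Hcyl : contains_cylinders S.

(* A point is the intersection of its cylinders. *)
Lemma sigma_singleton w0 : S (fun w => w = w0).
Proof.
  destruct HS as [_ [Hcompl Hunion]].
  replace (fun w => w = w0) with (fun w => ~ exists t, (fun t w => ~ cylinder w0 t w) t w).
  - apply Hcompl, Hunion; intros t; apply Hcompl, Hcyl.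
  - apply event_ext; intros w; split.
    + intros H. apply functional_extensionality; intros i. apply NNPP; intros Hi.
      apply H. exists (Nat.succ i); intros Hc. apply Hi, Hc, Nat.lt_succ_diag_r.
    + intros -> [t Ht]. apply Ht; intros i _; reflexivity.
Qed.

Lemma sigma_singleton_if (P : Prop) w0 : S (fun w => P /\ w = w0).
Proof.
  destruct HS as [Htop [Hcompl _]]. destruct (classic P) as [HP | HP].
  - replace (fun w => P /\ w = w0) with (fun w => w = w0) by (apply event_ext; tauto).
    apply sigma_singleton.
  - replace (fun w => P /\ w = w0) with (fun w => ~ (fun _ : Omega => True) w) by (apply event_ext; tauto).
    apply Hcompl, Htop.
Qed.

(* Such a set is a countable union of singletons. *)
Lemma sigma_word_paths (F : event) : (forall w, F w -> exists u, w = word_path u) -> S F.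
Proof.
  intros HF. destruct HS as [_ [_ Hunion]]. set (pt n k := word_path (nth k (words n) nil)).
  replace F with (fun w => exists n, (fun n w => exists k, (fun k w => F (pt n k) /\ w = pt n k) k w) n w).
  - apply Hunion; intros n. apply Hunion; intros k. apply sigma_singleton_if.
  - apply event_ext; intros w; split.
    + intros [n [k [Hk ->]]]; exact Hk.
    + intros Hw. destruct (HF w Hw) as [u ->].
      assert (Hu : In u (words (length u))) by (apply in_words; reflexivity).
      destruct (In_nth _ _ nil Hu) as [k [_ Hk]].
      exists (length u), k. unfold pt; rewrite Hk. split; [exact Hw | reflexivity].
Qed.

End Measurability.

Lemma nat_floor r : 0 <= r -> exists m : nat, INR m <= r < INR m + 1.
Proof.
  intros Hr. destruct (archimed r) as [H1 H2].
  assert (Hup : (0 < up r)%Z) by (apply lt_IZR; lra).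
  exists (Z.to_nat (up r - 1)). rewrite INR_IZR_INZ, Z2Nat.id, minus_IZR by lia. simpl; lra.
Qed.

Lemma count_selection {A} (l : list A) (e : A -> Prop) (k : nat) :
  NoDup l -> INR k <= sumL (fun v => indP (e v)) l ->
  exists s : A -> Prop, (forall v, s v -> e v) /\ sumL (fun v => indP (s v)) l = INR k.
Proof.
  revert k; induction l as [|a l IH]; intros k Hnd Hk.
  - destruct k; [exists (fun _ => False); split; [tauto | reflexivity]|].
    change (INR (S k) <= 0) in Hk. rewrite S_INR in Hk; pose proof (pos_INR k); lra.
  - inversion Hnd as [|a' l' Hna Hnd']; subst.
    change (INR k <= indP (e a) + sumL (fun v => indP (e v)) l) in Hk.
    assert (Hoff : forall s : A -> Prop, sumL (fun v => indP (v <> a /\ s v)) l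
                                             = sumL (fun v => indP (s v)) l).
    { intros s; apply sumL_ext; intros v Hv.
      assert (v <> a) by (intros ->; contradiction).
      destruct (classic (s v)); [rewrite !indP_T | rewrite !indP_F]; tauto. }
    destruct k as [|k].
    { exists (fun _ => False); split; [tauto|].
      rewrite (sumL_ext _ (fun _ => 0)) by (intros; apply indP_F; tauto).
      rewrite sumL_const; simpl; ring. }
    destruct (classic (e a)) as [ea | nea].
    + rewrite indP_T, S_INR in Hk by exact ea.
      destruct (IH k Hnd' ltac:(lra)) as [s [Hs Hcount]].
      exists (fun v => v = a \/ (v <> a /\ s v)); split; [intros v [-> | [_ h]]; auto|].
      change (indP (a = a \/ (a <> a /\ s a)) + sumL (fun v => indP (v = a \/ (v <> a /\ s v))) l
              = INR (S k)).
      rewrite indP_T by (left; reflexivity).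
      rewrite (sumL_ext _ (fun v => indP (v <> a /\ s v))), Hoff, Hcount, S_INR; [ring|].
      intros v Hv. assert (v <> a) by (intros ->; contradiction).
      f_equal; apply propositional_extensionality; tauto.
    + rewrite indP_F in Hk by exact nea.
      destruct (IH (S k) Hnd' ltac:(lra)) as [s [Hs Hcount]].
      exists (fun v => v <> a /\ s v); split; [intros v [_ h]; auto|].
      change (indP (a <> a /\ s a) + sumL (fun v => indP (v <> a /\ s v)) l = INR (S k)).
      rewrite indP_F, Hoff, Hcount by tauto; ring.
Qed.

Definition level_count (E : event) (p : list bool) : R :=
  sumL (fun v => indP (E (word_path (p ++ v)))) (words (length p)).

Lemma level_count_bounds E p : 0 <= level_count E p <= 2 ^ length p.
Proof.
  rewrite <- length_words. apply sumL_unit_interval; intros; apply indP_unit_interval.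
Qed.

Lemma level_selection (E : event) (alpha : R) : 0 <= alpha <= 1 ->
  exists sel : list bool -> list bool -> Prop, forall p,
    (forall v, sel p v -> E (word_path (p ++ v))) /\
    Rabs (sumL (fun v => indP (sel p v)) (words (length p)) - alpha * level_count E p) <= 1.
Proof.
  intros Ha.
  assert (Hsel : forall p, exists s : list bool -> Prop, (forall v, s v -> E (word_path (p ++ v))) /\
    Rabs (sumL (fun v => indP (s v)) (words (length p)) - alpha * level_count E p) <= 1).
  { intros p. pose proof (level_count_bounds E p) as Hc.
    destruct (nat_floor (alpha * level_count E p)) as [m Hm]; [nra|].
    destruct (count_selection (words (length p)) (fun v => E (word_path (p ++ v))) m
                (words_nodup _)) as [s [Hs Hcount]].
    { apply Rle_trans with (alpha * level_count E p); [lra|].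
      change (alpha * level_count E p <= level_count E p); nra. }
    exists s; split; [exact Hs|]. rewrite Hcount. apply Rabs_le; lra. }
  exists (fun p => proj1_sig (constructive_indefinite_description _ (Hsel p))).
  intros p; exact (proj2_sig (constructive_indefinite_description _ (Hsel p))).
Qed.

Section DiffuseDirac.

Context (V : (nat -> Prop) -> Prop) `{HV : filter.UltraFilter nat V}.
Hypothesis V_cofinite : forall N, V (fun n => (N <= n)%nat).

Definition level_freq (E : event) (x : Omega) (n : nat) : R := level_count E (prefix x n) / 2 ^ n.

Lemma level_freq_unit_interval E x n : 0 <= level_freq E x n <= 1.
Proof.
  unfold level_freq. pose proof (level_count_bounds E (prefix x n)) as Hb.
  rewrite length_prefix in Hb. pose proof (pow_lt 2 n ltac:(lra)).
  split; [apply Rmult_le_pos; [lra | left; apply Rinv_0_lt_compat; lra]|].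
  apply Rmult_le_reg_r with (2 ^ n); [lra|]. unfold Rdiv; rewrite Rmult_assoc, Rinv_l; lra.
Qed.

Lemma level_freq_or E F x n : (forall w, E w -> F w -> False) ->
  level_freq (fun w => E w \/ F w) x n = level_freq E x n + level_freq F x n.
Proof.
  intros Hd. unfold level_freq, level_count, Rdiv.
  rewrite <- Rmult_plus_distr_r, <- sumL_plus. f_equal.
  apply sumL_ext; intros v _. apply indP_or. apply Hd.
Qed.

Lemma level_freq_cylinder E x t n :
  subset (cylinder x t) E -> (t <= n)%nat -> level_freq E x n = 1.
Proof.
  intros HE Htn. unfold level_freq, level_count.
  rewrite (sumL_ext _ (fun _ => 1)).
  - rewrite sumL_const, length_prefix, length_words. field. apply pow_nonzero; lra.
  - intros v _. apply indP_T, HE. intros i Hi. apply word_path_prefix. lia.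
Qed.

(* The ultralimit of the uniform distributions on the [2^n] paths
   [word_path (prefix x n ++ v)]: a diffuse version of the Dirac mass at [x]. *)
Definition diffuse_dirac (x : Omega) (E : event) : R := ulim V (level_freq E x).

Lemma is_ulim_diffuse_dirac x E : is_ulim V (level_freq E x) (diffuse_dirac x E).
Proof. apply (is_ulim_ulim V _ 0 1), level_freq_unit_interval. Qed.

Lemma diffuse_dirac_unit_interval x E : 0 <= diffuse_dirac x E <= 1.
Proof.
  pose proof (is_ulim_diffuse_dirac x E) as Hlim.
  split; [apply (is_ulim_ge V _ _ _ (uf_all V _ (fun n => proj1 (level_freq_unit_interval E x n))))
         |apply (is_ulim_le V _ _ _ (uf_all V _ (fun n => proj2 (level_freq_unit_interval E x n))))];
    exact Hlim.
Qed.

Lemma diffuse_dirac_or x E F : (forall w, E w -> F w -> False) ->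
  diffuse_dirac x (fun w => E w \/ F w) = diffuse_dirac x E + diffuse_dirac x F.
Proof.
  intros Hd. apply (ulim_eq V).
  apply (is_ulim_eventually V) with (f := fun n => level_freq E x n + level_freq F x n).
  - apply (uf_all V); intros n. symmetry; apply level_freq_or, Hd.
  - apply (is_ulim_plus V); apply is_ulim_diffuse_dirac.
Qed.

Lemma diffuse_dirac_cylinder x E t : subset (cylinder x t) E -> diffuse_dirac x E = 1.
Proof.
  intros HE. apply (ulim_eq V), (is_ulim_eventually V (fun _ => 1)); [|apply (is_ulim_const V)].
  generalize (V_cofinite t); apply (uf_mono V); intros n Hn.
  symmetry; apply (level_freq_cylinder E x t n HE Hn).
Qed.

Lemma indP_le_diffuse_dirac x O : is_open O -> indP (O x) <= diffuse_dirac x O.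
Proof.
  intros HO. destruct (classic (O x)) as [Ox | nOx].
  - destruct (HO x Ox) as [t Ht]. rewrite indP_T, (diffuse_dirac_cylinder x O t Ht) by exact Ox; lra.
  - rewrite indP_F by exact nOx. apply diffuse_dirac_unit_interval.
Qed.

Lemma is_ulim_geometric_close (f g : nat -> R) L :
  (forall n, Rabs (f n - g n) <= (/ 2) ^ n) -> is_ulim V g L -> is_ulim V f L.
Proof.
  intros Hfg Hg.
  assert (Hd0 : is_ulim V (fun n => f n - g n) 0).
  { intros e He. destruct (pow_lt_1_zero (/ 2) ltac:(rewrite Rabs_right; lra) e He) as [N HN].
    generalize (V_cofinite N); apply (uf_mono V); intros n Hn.
    rewrite Rminus_0_r. eapply Rle_lt_trans; [apply Hfg|]. specialize (HN n Hn).
    rewrite Rabs_right in HN; [exact HN | apply Rle_ge, pow_le; lra]. }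
  replace L with (0 + L) by ring.
  apply (is_ulim_eventually V (fun n => (f n - g n) + g n)).
  - apply (uf_all V); intros n; ring.
  - apply (is_ulim_plus V); assumption.
Qed.

(* The splitting set [F] does not depend on [x]: this is what makes mixtures and
   ultralimits of diffuse Dirac masses strongly nonatomic. *)
Lemma diffuse_dirac_split E alpha : 0 <= alpha <= 1 ->
  exists F : event, subset F E /\ (forall w, F w -> exists u, w = word_path u) /\
    forall x, diffuse_dirac x F = alpha * diffuse_dirac x E.
Proof.
  intros Ha. destruct (level_selection E alpha Ha) as [sel Hsel].
  set (F := fun w => exists p v, length v = length p /\ w = word_path (p ++ v) /\ sel p v).
  exists F; split; [|split].
  - intros w [p [v [_ [-> Hv]]]]. apply (proj1 (Hsel p)), Hv.
  - intros w [p [v [_ [-> _]]]]. eauto.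
  - intros x. apply (ulim_eq V).
    assert (HF : forall n, level_count F (prefix x n)
                 = sumL (fun v => indP (sel (prefix x n) v)) (words (length (prefix x n)))).
    { intros n. apply sumL_ext; intros v Hv. apply in_words in Hv.
      destruct (classic (sel (prefix x n) v)) as [h | h].
      - rewrite (indP_T (sel _ v)) by exact h.
        apply indP_T. exists (prefix x n), v. repeat split; assumption.
      - rewrite (indP_F (sel _ v)) by exact h. apply indP_F.
        intros [p [v' [Hl [Heq Hs]]]]. apply word_path_inj in Heq.
        assert (Hp : length (prefix x n) = length p).
        { apply (f_equal (@length bool)) in Heq. rewrite !length_app in Heq. lia. }
        destruct (app_inv_length _ _ _ _ Heq Hp) as [<- <-]. contradiction. }
    apply (is_ulim_geometric_close _ (fun n => alpha * level_freq E x n));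
      [|apply (is_ulim_scal V), is_ulim_diffuse_dirac].
    intros n. destruct (Hsel (prefix x n)) as [_ Hcount].
    rewrite <- HF in Hcount. pose proof (pow_lt 2 n ltac:(lra)).
    unfold level_freq. rewrite pow_inv.
    replace (level_count F (prefix x n) / 2 ^ n - alpha * (level_count E (prefix x n) / 2 ^ n))
      with ((level_count F (prefix x n) - alpha * level_count E (prefix x n)) * / 2 ^ n)
      by (field; lra).
    rewrite Rabs_mult, (Rabs_right (/ 2 ^ n)) by (left; apply Rinv_0_lt_compat; lra).
    rewrite <- (Rmult_1_l (/ 2 ^ n)) at 2.
    apply Rmult_le_compat_r; [left; apply Rinv_0_lt_compat; lra | exact Hcount].
Qed.

End DiffuseDirac.

Section Mixtures.

Context (V : (nat -> Prop) -> Prop) `{HV : filter.UltraFilter nat V}.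
Hypothesis V_cofinite : forall N, V (fun n => (N <= n)%nat).

Definition avg_dirac (ms : list Omega) (E : event) : R :=
  sumL (fun w => diffuse_dirac V w E) ms / INR (length ms).

Lemma avg_dirac_unit_interval ms E : ms <> nil -> 0 <= avg_dirac ms E <= 1.
Proof.
  intros Hms. pose proof (length_pos ms Hms).
  pose proof (sumL_unit_interval (fun w => diffuse_dirac V w E) ms
                (fun w _ => diffuse_dirac_unit_interval V w E)).
  unfold avg_dirac. split; [apply Rmult_le_pos; [lra | left; apply Rinv_0_lt_compat; lra]|].
  apply Rmult_le_reg_r with (INR (length ms)); [lra|]. unfold Rdiv; rewrite Rmult_assoc, Rinv_l; lra.
Qed.

Lemma avg_dirac_true ms : ms <> nil -> avg_dirac ms (fun _ => True) = 1.
Proof.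
  intros Hms. unfold avg_dirac.
  rewrite (sumL_ext _ (fun _ => 1)) by (intros w _; apply (diffuse_dirac_cylinder V V_cofinite w _ 0);
                                       intros ? _; exact I).
  rewrite sumL_const. field. apply Rgt_not_eq, length_pos, Hms.
Qed.

Lemma avg_dirac_or ms E F : (forall w, E w -> F w -> False) ->
  avg_dirac ms (fun w => E w \/ F w) = avg_dirac ms E + avg_dirac ms F.
Proof.
  intros Hd. unfold avg_dirac, Rdiv. rewrite <- Rmult_plus_distr_r, <- sumL_plus. f_equal.
  apply sumL_ext; intros w _; apply (diffuse_dirac_or V), Hd.
Qed.

Lemma avg_dirac_scale ms E F alpha : (forall x, diffuse_dirac V x F = alpha * diffuse_dirac V x E) ->
  avg_dirac ms F = alpha * avg_dirac ms E.
Proof.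
  intros HF. unfold avg_dirac, Rdiv. rewrite <- Rmult_assoc, <- sumL_scal. f_equal.
  apply sumL_ext; intros w _; apply HF.
Qed.

Lemma avg_dirac_open_ge ms O : is_open O ->
  sumL (fun w => indP (O w)) ms / INR (length ms) <= avg_dirac ms O.
Proof.
  intros HO. unfold avg_dirac, Rdiv. apply Rmult_le_compat_r.
  - destruct ms; [simpl; rewrite Rinv_0; lra | left; apply Rinv_0_lt_compat, length_pos; discriminate].
  - apply sumL_le; intros w _; apply (indP_le_diffuse_dirac V V_cofinite), HO.
Qed.

Context {J : Type} (U : (J -> Prop) -> Prop) `{HU : filter.UltraFilter J U}.
Variable ms : J -> list Omega.
Hypothesis ms_nonempty : forall j, ms j <> nil.

Definition ulim_avg_dirac (E : event) : R := ulim U (fun j => avg_dirac (ms j) E).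

Lemma is_ulim_avg_dirac E : is_ulim U (fun j => avg_dirac (ms j) E) (ulim_avg_dirac E).
Proof. apply (is_ulim_ulim U _ 0 1); intros j; apply avg_dirac_unit_interval, ms_nonempty. Qed.

Lemma ulim_avg_dirac_ge E c : U (fun j => c <= avg_dirac (ms j) E) -> c <= ulim_avg_dirac E.
Proof. intros Hc; apply (is_ulim_ge U _ _ _ Hc), is_ulim_avg_dirac. Qed.

Lemma ulim_avg_dirac_opinion S : is_sigma_algebra S -> contains_cylinders S ->
  opinion S ulim_avg_dirac.
Proof.
  intros HS Hcyl. split; [split; [|split] |].
  - intros E _. apply ulim_avg_dirac_ge, (uf_all U); intros j.
    apply avg_dirac_unit_interval, ms_nonempty.
  - apply (ulim_eq U), (is_ulim_eventually U (fun _ => 1)); [|apply (is_ulim_const U)].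
    apply (uf_all U); intros j; symmetry; apply avg_dirac_true, ms_nonempty.
  - intros E F _ _ Hd. apply (ulim_eq U).
    apply (is_ulim_eventually U (fun j => avg_dirac (ms j) E + avg_dirac (ms j) F)).
    + apply (uf_all U); intros j; symmetry; apply avg_dirac_or, Hd.
    + apply (is_ulim_plus U); apply is_ulim_avg_dirac.
  - intros E alpha _ Ha.
    destruct (diffuse_dirac_split V V_cofinite E alpha Ha) as [F [HFE [HFpts HF]]].
    exists F; split; [apply (sigma_word_paths S HS Hcyl F HFpts) | split; [exact HFE|]].
    apply (ulim_eq U), (is_ulim_eventually U (fun j => alpha * avg_dirac (ms j) E)).
    + apply (uf_all U); intros j; symmetry; apply avg_dirac_scale, HF.
    + apply (is_ulim_scal U), is_ulim_avg_dirac.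
Qed.

End Mixtures.

Lemma mass_sumL (z : list (setfun * R)) (A : setfun -> Prop) :
  mass z A = sumL (fun Pw => indP (A (fst Pw)) * snd Pw) z.
Proof.
  induction z as [|[P w] z IH]; [reflexivity|]. cbn [mass]. rewrite IH.
  change (sumL ?f ((P, w) :: z)) with (f (P, w) + sumL f z). cbn [fst snd].
  unfold indP; destruct (excluded_middle_informative (A P)); ring.
Qed.

Lemma strategy_mass_untested S (T : setfun -> event) z w : strategy S z ->
  mass z (fun P => opinion S P /\ ~ T P w) = 1 - sumL (fun Pw => indP (T (fst Pw) w) * snd Pw) z.
Proof.
  intros [Hz Hsum]. change (sumL snd z = 1) in Hsum.
  rewrite mass_sumL, <- Hsum, <- sumL_minus. apply sumL_ext; intros Pw HPw.
  destruct (Hz Pw HPw) as [Hop _]. destruct (classic (T (fst Pw) w)).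
  - rewrite indP_F by tauto. rewrite indP_T by assumption. ring.
  - rewrite indP_T by tauto. rewrite indP_F by assumption. ring.
Qed.

Lemma paths_beating_opinions S (T : setfun -> event) (c c2 : R) (A : list setfun) :
  0 < c2 < c ->
  (forall z, strategy S z -> exists w, sumL (fun Pw => indP (T (fst Pw) w) * snd Pw) z > c) ->
  exists ms : list Omega, ms <> nil /\
    forall Q, In Q A -> opinion S Q -> sumL (fun w => indP (T Q w)) ms >= c2 * INR (length ms).
Proof.
  intros Hc beaten.
  set (B := filter (fun Q => if excluded_middle_informative (opinion S Q) then true else false) A).
  assert (HB : forall Q, In Q B <-> In Q A /\ opinion S Q).
  { intros Q; unfold B; rewrite filter_In.
    destruct (excluded_middle_informative (opinion S Q)); intuition discriminate. }
  set (expert i := nth i B (fun _ : event => 0)).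
  destruct (uniform_response_average Omega (fun _ => false) (length B)
              (fun w i => indP (T (expert i) w)) c c2) as [ms [Hms Hgain]].
  - intros w i; unfold indP; destruct (excluded_middle_informative _); auto.
  - exact Hc.
  - intros p Hp Hsum.
    set (z := map (fun i => (expert i, p i)) (seq 0 (length B))).
    assert (Hz : strategy S z).
    { split.
      - intros Pw HPw. unfold z in HPw. apply in_map_iff in HPw.
        destruct HPw as [i [<- Hi]]. apply in_seq in Hi. split; [|apply Hp].
        apply HB, nth_In. lia.
      - change (sumL snd z = 1). unfold z; rewrite sumL_map; exact Hsum. }
    destruct (beaten z Hz) as [w Hw]. exists w.
    unfold z in Hw; rewrite sumL_map in Hw. erewrite sumL_ext; [exact Hw|].
    intros i _; simpl; ring.
  - exists ms; split; [exact Hms|]. intros Q HQ HopQ.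
    destruct (In_nth B Q (fun _ => 0) (proj2 (HB Q) (conj HQ HopQ))) as [i [Hi <-]].
    apply (Hgain i Hi).
Qed.

(* P is the ultralimit, along the filter of cofinal finite lists of opinions, of the
   averaged diffuse Dirac masses at the paths chosen for each list. *)
Lemma opinion_charging_its_test S (T : setfun -> event) (c2 : R) :
  is_sigma_algebra S -> contains_cylinders S ->
  (forall P, opinion S P -> is_open (T P)) ->
  (forall A : list setfun, exists ms : list Omega, ms <> nil /\
    forall Q, In Q A -> opinion S Q -> sumL (fun w => indP (T Q w)) ms >= c2 * INR (length ms)) ->
  exists P, opinion S P /\ c2 <= P (T P).
Proof.
  intros HS Hcyl HTopen Hms.
  destruct (directed_in_ultrafilter (fun N n => (N <= n)%nat)) as [V [HV V_cofinite]].
  { exact (inhabits 0%nat). }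
  { intros N1 N2; exists (Nat.max N1 N2); intros n Hn; lia. }
  { intros N; exists N; lia. }
  destruct (directed_in_ultrafilter (fun L0 A : list setfun => incl L0 A)) as [U [HU U_incl]].
  { exact (inhabits nil). }
  { intros L1 L2; exists (L1 ++ L2); intros A HA.
    split; intros a Ha; apply HA, in_app_iff; auto. }
  { intros L0; exists L0; apply incl_refl. }
  set (ms A := proj1_sig (constructive_indefinite_description _ (Hms A))).
  assert (Hms' : forall A, ms A <> nil /\ forall Q, In Q A -> opinion S Q ->
            sumL (fun w => indP (T Q w)) (ms A) >= c2 * INR (length (ms A)))
    by (intros A; exact (proj2_sig (constructive_indefinite_description _ (Hms A)))).
  clearbody ms.
  set (P := ulim_avg_dirac V U ms).
  assert (HP : opinion S P)
    by (apply (ulim_avg_dirac_opinion V V_cofinite U); [intros A; apply Hms' | exact HS | exact Hcyl]).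
  exists P; split; [exact HP|].
  apply (ulim_avg_dirac_ge V U ms (fun A => proj1 (Hms' A))).
  generalize (U_incl (P :: nil)); apply (uf_mono U); intros A HA.
  destruct (Hms' A) as [Hne Hge].
  eapply Rle_trans; [|apply (avg_dirac_open_ge V V_cofinite), HTopen, HP].
  specialize (Hge P (HA P (or_introl eq_refl)) HP). pose proof (length_pos _ Hne).
  apply Rmult_le_reg_r with (INR (length (ms A))); [lra|].
  unfold Rdiv; rewrite Rmult_assoc, Rinv_l; lra.
Qed.

Theorem theorem2
  (S : event -> Prop) (HS : is_sigma_algebra S) (Hcyl : contains_cylinders S)
  (eps : R) (Heps : 0 <= eps < 1)
  (T : setfun -> event)
  (HTopen : forall P, opinion S P -> is_open (T P))
  (HTI : forall P, opinion S P -> P (T P) <= eps) :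
  forall delta : R, 0 < delta <= 1 - eps ->
    exists z : list (setfun * R), strategy S z /\
      forall w : Omega,
        mass z (fun P => opinion S P /\ ~ T P w) >= 1 - eps - delta.
Proof.
  intros delta Hdelta. apply NNPP; intros Hnone.
  assert (beaten : forall z, strategy S z ->
            exists w, sumL (fun Pw => indP (T (fst Pw) w) * snd Pw) z > eps + delta).
  { intros z Hz. apply NNPP; intros Hn. apply Hnone. exists z; split; [exact Hz|].
    intros w. rewrite (strategy_mass_untested S T z w Hz).
    apply Rnot_lt_ge; intros Hlt. apply Hn. exists w. lra. }
  destruct (opinion_charging_its_test S T (eps + delta / 2) HS Hcyl HTopen) as [P [HP HPT]].
  { intros A. apply (paths_beating_opinions S T (eps + delta)); [lra | exact beaten]. }
  pose proof (HTI P HP). lra.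
Qed.
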